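(* Let $n,k,d$ be positive integers with $d<n$. For every $\mathcal{A}\subset 2^{[n]}$ with $\mathrm{VC}(\triangle\mathcal{A}^k)\le d$, we have $|\mathcal{A}|\le p(n,k,d)$. Moreover there exist families $\mathcal{A}\subset 2^{[n]}$ with $\mathrm{VC}(\triangle\mathcal{A}^k)\le d$ and $|\mathcal{A}|=p(n,k,d)$. That is, the maximum size of $\mathcal{A}\subset2^{[n]}$ with $\mathrm{VC}(\triangle\mathcal{A}^k)\le d$ equals $p(n,k,d)$.
   Context: $[n]=\{1,\dots,n\}$. $\mathrm{VC}(\mathcal{F})$ is the largest cardinality of a $Y\subset[n]$ with $\{S\cap Y:S\in\mathcal{F}\}=2^Y$. $\triangle\mathcal{A}^k=\{S_1\triangle\cdots\triangle S_k: S_i\in\mathcal{A}\}$ and $\cup\mathcal{A}^k=\{S_1\cup\cdots\cup S_k: S_i\in\mathcal{A}\}$ (the $S_i$ need not be distinct). A family $\mathcal{F}\subset2^{[n]}$ is $k$-wise $(n-d)$-union if every member of $\cup\mathcal{F}^k$ has cardinality at most $d$. $p(n,k,d)$ denotes the maximum size of a $k$-wise $(n-d)$-union family $\mathcal{F}\subset 2^{[n]}$. *)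

From mathcomp Require Import all_boot.
Set Implicit Arguments. Unset Strict Implicit. Unset Printing Implicit Defensive.

(* Ground set [n] is modelled by 'I_n; families are {set {set 'I_n}}. *)

Definition symdiff (T : finType) (A B : {set T}) : {set T} := (A :\: B) :|: (B :\: A).

Definition symdiff_pow (n k : nat) (A : {set {set 'I_n}}) : {set {set 'I_n}} :=
  [set S | [exists f : {ffun 'I_k -> {set 'I_n}},
      [forall i, f i \in A] && (S == \big[@symdiff _/set0]_(i < k) f i)]].

Definition union_pow (n k : nat) (A : {set {set 'I_n}}) : {set {set 'I_n}} :=
  [set S | [exists f : {ffun 'I_k -> {set 'I_n}},
      [forall i, f i \in A] && (S == \bigcup_(i < k) f i)]].

Definition shatters (n : nat) (F : {set {set 'I_n}}) (Y : {set 'I_n}) : bool :=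
  [set S :&: Y | S in F] == powerset Y.

Definition VC (n : nat) (F : {set {set 'I_n}}) : nat :=
  \max_(Y : {set 'I_n} | shatters F Y) #|Y|.

Definition kwise_union (n k d : nat) (F : {set {set 'I_n}}) : bool :=
  [forall S in union_pow k F, #|S| <= d].

Definition p (n k d : nat) : nat :=
  \max_(F : {set {set 'I_n}} | kwise_union k d F) #|F|.

From mathcomp Require Import all_boot.
Set Implicit Arguments. Unset Strict Implicit. Unset Printing Implicit Defensive.

(* Compression: deleting a from every member S of A with a \in S and S \ a \notin A
   preserves |A|, lowers the total size of the members, and does not raise
   VC(ΔA^k), because a witness in the compressed family lifts back to A away from a,
   while the membership of a is repaired by swapping a member B \ni a for B \ a,
   both of which lie in A.  So A may be taken down-closed, and then every subset of
   a union S_1 ∪ ... ∪ S_k of members is the symmetric difference of disjoint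
   subsets of the S_i: ΔA^k shatters the union, which thus has at most d elements,
   and A is k-wise (n-d)-union.  Conversely every member of ΔF^k is contained in a
   member of ∪F^k, so an extremal k-wise (n-d)-union family attains the bound. *)

Section BigSymdiff.
Variables (T I : finType).

Definition bigsymdiff (f : I -> {set T}) : {set T} := \big[@symdiff T/set0]_i f i.

Lemma bigsymdiff_ffun (f : I -> {set T}) : bigsymdiff [ffun i => f i] = bigsymdiff f.
Proof. by apply: eq_bigr => i _; rewrite ffunE. Qed.

Lemma in_symdiff (A B : {set T}) x : (x \in symdiff A B) = (x \in A) (+) (x \in B).
Proof. by rewrite /symdiff !inE; case: (x \in A); case: (x \in B). Qed.

Lemma in_bigsymdiff (f : I -> {set T}) x :
  (x \in bigsymdiff f) = \big[addb/false]_i (x \in f i).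
Proof.
apply: (big_morph (fun S : {set T} => x \in S)); last by rewrite inE.
by move=> A B; rewrite in_symdiff.
Qed.

Lemma bigsymdiff_subset_bigcup (f : I -> {set T}) : bigsymdiff f \subset \bigcup_i f i.
Proof.
apply/subsetP => x; rewrite in_bigsymdiff; case: (pickP (fun i => x \in f i)).
  by move=> i xfi _; apply/bigcupP; exists i.
by move=> nf; rewrite big1.
Qed.

Lemma in_bigsymdiff_update (f : I -> {set T}) i0 (s : {set T}) x :
  (x \in bigsymdiff (fun i => if i == i0 then s else f i))
  = (x \in s) (+) ((x \in f i0) (+) (x \in bigsymdiff f)).
Proof.
rewrite !in_bigsymdiff (bigD1 i0) // [in RHS](bigD1 i0) //= eqxx addKb.
by congr (_ (+) _); apply: eq_bigr => i /negbTE ->.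
Qed.

Lemma bigsymdiffD1 (f g : I -> {set T}) a :
  (forall i, f i :\ a = g i :\ a) -> bigsymdiff f :\ a = bigsymdiff g :\ a.
Proof.
move=> fg; apply/setP => x; rewrite !in_setD1 !in_bigsymdiff.
have [//|neq_xa] := eqVneq x a; congr (_ && _); apply: eq_bigr => i _.
by have /setP/(_ x) := fg i; rewrite !in_setD1 neq_xa.
Qed.

(* Each x \in Z goes to the piece of the first f i containing it. *)
Lemma bigsymdiff_partition (f : I -> {set T}) (Z : {set T}) :
  Z \subset \bigcup_i f i ->
  exists2 g : I -> {set T}, (forall i, g i \subset f i) & bigsymdiff g = Z.
Proof.
move=> Zf; pose first x := [pick i | x \in f i].
exists (fun i => [set x in Z | first x == Some i]).
  move=> i; apply/subsetP => x; rewrite inE /first => /andP[_].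
  by case: pickP => [j xfj /eqP[<-] | _].
apply/setP => x; rewrite in_bigsymdiff; case: (boolP (x \in Z)) => xZ; last first.
  by rewrite big1 // => i _; rewrite inE (negbTE xZ).
have [j first_x] : exists j, first x = Some j.
  have /bigcupP[i _ xfi] := subsetP Zf x xZ.
  by rewrite /first; case: pickP => [j _ | /(_ i)]; [exists j | rewrite xfi].
rewrite (bigD1 j) //= big1 => [|i neq_ij]; rewrite inE xZ first_x ?eqxx //=.
by apply/eqP => -[eq_ij]; rewrite eq_ij eqxx in neq_ij.
Qed.

End BigSymdiff.

Section Compression.
Variables (T : finType) (A : {set {set T}}) (a : T).

Definition compress (S : {set T}) : {set T} :=
  if (a \in S) && (S :\ a \notin A) then S :\ a else S.

Definition compression : {set {set T}} := compress @: A.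

Definition weight (F : {set {set T}}) : nat := \sum_(S in F) #|S|.

Lemma compress_inj : {in A &, injective compress}.
Proof.
move=> S S' SA S'A; rewrite /compress.
case: ifP => [/andP[aS nSA] | _]; case: ifP => [/andP[aS' nS'A] | _] //.
- move=> eqD; apply/setP => x; have [-> | neq_xa] := eqVneq x a; first by rewrite aS aS'.
  by move/setP/(_ x): eqD; rewrite !in_setD1 neq_xa.
- by move=> eqS; rewrite eqS S'A in nSA.
- by move=> eqS; rewrite -eqS SA in nS'A.
Qed.

Lemma card_compression : #|compression| = #|A|.
Proof. exact: card_in_imset compress_inj. Qed.

Lemma compression_lift B : B \in compression -> exists2 S, S \in A & S :\ a = B :\ a.
Proof.
case/imsetP => S SA ->; exists S => //; rewrite /compress.
by case: ifP => // _; rewrite setDDl setUid.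
Qed.

Lemma compression_mem B : B \in compression -> a \in B -> B \in A /\ B :\ a \in A.
Proof.
case/imsetP => S SA ->; rewrite /compress; case: ifP => [_ | ]; first by rewrite !inE eqxx.
by move=> + aS; rewrite aS /= => /negbFE.
Qed.

Lemma weight_compression_lt S : S \in A -> a \in S -> S :\ a \notin A ->
  weight compression < weight A.
Proof.
move=> SA aS nSA; rewrite /weight /compression big_imset; last exact: compress_inj.
rewrite [X in _ < X](bigD1 S) // [X in X < _](bigD1 S) //=.
rewrite -addSn; apply: leq_add; first by rewrite /compress aS nSA [X in _ < X](cardsD1 a) aS.
apply: leq_sum => S' _; rewrite /compress; case: ifP => // _.
by rewrite [X in _ <= X](cardsD1 a) leq_addl.
Qed.

End Compression.

Definition down_closed (T : finType) (F : {set {set T}}) :=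
  forall S S' : {set T}, S \in F -> S' \subset S -> S' \in F.

Lemma down_closed_setD1 (T : finType) (A : {set {set T}}) :
  (forall (a : T) S, S \in A -> a \in S -> S :\ a \in A) -> down_closed A.
Proof.
move=> closedA S; elim: {S}_.+1 {-2}S (ltnSn #|S|) => // m IH S ltSm S' SA S'S.
have [-> // | neq_S'S] := eqVneq S' S.
have /properP[_ [a aS nS'a]] : S' \proper S by rewrite properEneq neq_S'S.
apply: (IH (S :\ a)); first by move: ltSm; rewrite (cardsD1 a S) aS.
  exact: closedA.
by rewrite subsetD1 S'S.
Qed.

Section Shattering.
Variables n k : nat.
Implicit Types (A F : {set {set 'I_n}}) (S Y Z : {set 'I_n}).

Lemma shattersP F Y :
  reflect (forall Z, Z \subset Y -> exists2 S, S \in F & S :&: Y = Z) (shatters F Y).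
Proof.
apply: (iffP eqP) => [eqFY Z ZY | shF].
  have : Z \in powerset Y by rewrite powersetE.
  by rewrite -eqFY => /imsetP[S SF ->]; exists S.
apply/setP => Z; rewrite powersetE; apply/imsetP/idP => [[S _ ->] | /shF].
  exact: subsetIr.
by case=> S SF <-; exists S.
Qed.

Lemma symdiff_powP A S :
  reflect (exists2 f : 'I_k -> {set 'I_n}, (forall i, f i \in A) & S = bigsymdiff f)
          (S \in symdiff_pow k A).
Proof.
rewrite inE; apply: (iffP existsP) => [[f /andP[/forallP fA /eqP ->]] | [f fA ->]].
  by exists f.
exists [ffun i => f i]; rewrite -[bigsymdiff f]bigsymdiff_ffun eqxx andbT.
by apply/forallP => i; rewrite ffunE.
Qed.

Lemma union_powP A S :
  reflect (exists2 f : 'I_k -> {set 'I_n}, (forall i, f i \in A) & S = \bigcup_i f i)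
          (S \in union_pow k A).
Proof.
rewrite inE; apply: (iffP existsP) => [[f /andP[/forallP fA /eqP ->]] | [f fA ->]].
  by exists f.
exists [ffun i => f i]; apply/andP; split; first by apply/forallP => i; rewrite ffunE.
by apply/eqP/eq_bigr => i _; rewrite ffunE.
Qed.

Lemma shatters_symdiff_powP A Y :
  reflect (forall Z, Z \subset Y -> exists2 f : 'I_k -> {set 'I_n},
             (forall i, f i \in A) & bigsymdiff f :&: Y = Z)
          (shatters (symdiff_pow k A) Y).
Proof.
apply: (iffP (shattersP _ _)) => [shA Z /shA[_ /symdiff_powP[f fA ->]] | shA Z /shA[f fA]].
  by exists f.
by exists (bigsymdiff f) => //; apply/symdiff_powP; exists f.
Qed.

Lemma kwise_union_VC d A : kwise_union k d A -> VC (symdiff_pow k A) <= d.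
Proof.
move/forall_inP=> kwA; apply/bigmax_leqP => Y /shatters_symdiff_powP/(_ Y (subxx Y)).
case=> f fA trY; apply: leq_trans (kwA (\bigcup_i f i) _).
  by apply/subset_leq_card/(subset_trans _ (bigsymdiff_subset_bigcup f)); rewrite -trY subsetIl.
by apply/union_powP; exists f.
Qed.

Lemma down_closed_kwise_union d A :
  down_closed A -> VC (symdiff_pow k A) <= d -> kwise_union k d A.
Proof.
move=> downA /bigmax_leqP VCd; apply/forall_inP => _ /union_powP[f fA ->].
apply/VCd/shatters_symdiff_powP => Z Zf.
have [g gf gZ] := bigsymdiff_partition Zf.
exists g; first by move=> i; exact: downA (fA i) (gf i).
by rewrite gZ; apply/setIidPl.
Qed.

Lemma compression_lift_family A a (g : 'I_k -> {set 'I_n}) :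
  (forall i, g i \in compression A a) ->
  exists2 f : 'I_k -> {set 'I_n}, (forall i, f i \in A) & forall i, f i :\ a = g i :\ a.
Proof.
move=> gC; have [f fA fg] := fin_all_exists2 (fun i => compression_lift (gC i)).
by exists f.
Qed.

Lemma compression_lift_bigsymdiff_mem A a (g : 'I_k -> {set 'I_n}) (b : bool) :
  (forall i, g i \in compression A a) -> a \in bigsymdiff g ->
  exists2 h : 'I_k -> {set 'I_n}, (forall i, h i \in A) &
    bigsymdiff h :\ a = bigsymdiff g :\ a /\ (a \in bigsymdiff h) = b.
Proof.
move=> gC ag; have [f fA fg] := compression_lift_family gC.
have /bigcupP[j _ agj] := subsetP (bigsymdiff_subset_bigcup g) a ag.
have [gjA gjaA] := compression_mem (gC j) agj.
pose s := if b (+) ((a \in f j) (+) (a \in bigsymdiff f)) then g j else g j :\ a.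
have sA : s \in A by rewrite /s; case: ifP.
have sD1 : s :\ a = g j :\ a by rewrite /s; case: ifP; rewrite // setDDl setUid.
have a_s : (a \in s) = b (+) ((a \in f j) (+) (a \in bigsymdiff f)).
  by rewrite /s; case: ifP => _; rewrite ?agj // !inE eqxx.
exists (fun i => if i == j then s else f i); first by move=> i; case: eqP.
split; last by rewrite in_bigsymdiff_update a_s addbK.
by apply: bigsymdiffD1 => i; case: eqP => [-> |].
Qed.

Lemma VC_symdiff_pow_compression A a :
  VC (symdiff_pow k (compression A a)) <= VC (symdiff_pow k A).
Proof.
apply/bigmax_leqP => Y /shatters_symdiff_powP shY; apply: leq_bigmax_cond.
apply/shatters_symdiff_powP => Z ZY.
have agree_off_a (S S' : {set 'I_n}) x : S :\ a = S' :\ a -> x != a -> (x \in S) = (x \in S').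
  by move=> /setP/(_ x); rewrite !in_setD1 => + neq_xa; rewrite neq_xa.
have [aY | naY] := boolP (a \in Y); last first.
  have [g gC trg] := shY Z ZY; have [f fA fg] := compression_lift_family gC.
  exists f => //; rewrite -trg; apply/setP => x; rewrite !inE.
  have [xY | _] := boolP (x \in Y); rewrite ?andbF ?andbT //.
  by apply: agree_off_a; [apply: bigsymdiffD1 | apply: contraNneq naY => <-].
have [g gC trg] : exists2 g : 'I_k -> {set 'I_n}, (forall i, g i \in compression A a) &
    bigsymdiff g :&: Y = Z :|: [set a].
  by apply: shY; rewrite subUset ZY sub1set.
have ag : a \in bigsymdiff g by have /setP/(_ a) := trg; rewrite !inE eqxx orbT => /andP[].
have [h hA [hg ah]] := compression_lift_bigsymdiff_mem (a \in Z) gC ag.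
exists h => //; apply/setP => x; rewrite inE.
have [-> | neq_xa] := eqVneq x a; first by rewrite ah aY andbT.
have /setP/(_ x) := trg; rewrite !inE (negbTE neq_xa) orbF => <-.
by rewrite (agree_off_a _ _ _ hg).
Qed.

Lemma card_le_p d A : VC (symdiff_pow k A) <= d -> #|A| <= p n k d.
Proof.
move wA: (weight A) => m; elim/ltn_ind: m A wA => m IH A wA VCA.
case: (boolP [exists a, exists S in A, (a \in S) && (S :\ a \notin A)]).
  case/existsP => a /exists_inP[S SA /andP[aS nSaA]].
  rewrite -(card_compression A a); apply: IH (erefl _) _.
    by rewrite -wA; exact: weight_compression_lt SA aS nSaA.
  exact: leq_trans (VC_symdiff_pow_compression A a) VCA.
move=> noA; apply: leq_bigmax_cond; apply: (down_closed_kwise_union _ VCA).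
apply: down_closed_setD1 => a S SA aS; apply: contraNT noA => nSaA.
by apply/existsP; exists a; apply/exists_inP; exists S; rewrite ?aS.
Qed.

Lemma kwise_union0 d : kwise_union k d (set0 : {set {set 'I_n}}).
Proof.
apply/forall_inP => _ /union_powP[f f0 ->].
by rewrite big1 ?cards0 // => i _; have := f0 i; rewrite inE.
Qed.

Lemma p_attained d : exists2 F : {set {set 'I_n}}, kwise_union k d F & #|F| = p n k d.
Proof.
have [|F kwF maxF] := eq_bigmax_cond (fun F => #|F|) (A := @kwise_union n k d).
  by apply/card_gt0P; exists set0; apply: kwise_union0.
by exists F; last exact: esym maxF.
Qed.

End Shattering.

Theorem theorem5 (n k d : nat) (hk : 0 < k) (hd : 0 < d) (hdn : d < n) :
  (forall A : {set {set 'I_n}}, VC (symdiff_pow k A) <= d -> #|A| <= p n k d) /\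
  (exists A : {set {set 'I_n}}, VC (symdiff_pow k A) <= d /\ #|A| = p n k d).
Proof.
split; first exact: card_le_p.
have [F kwF cardF] := p_attained n k d.
by exists F; split; first exact: kwise_union_VC.
Qed.
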